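(* Let $L$ be a frame and $f\in\overline{\mathrm{F}}(L)$. The following are equivalent: (1) $f$ is real-valued; (2) $\big(\bigvee_{r\in\mathbb{Q}}f(r,\textsf{---})\big)^\ast=0=\big(\bigvee_{s\in\mathbb{Q}}f(\textsf{---},s)\big)^\ast$; (3) $\bigwedge_{s\in\mathbb{Q}}f(\textsf{---},s)=0=\bigwedge_{r\in\mathbb{Q}}f(r,\textsf{---})$.
   Context: $\mathbb{Q}$ is the rationals. A sublocale of $L$ is a subset closed under arbitrary meets and such that $x\to s\in S$ for $x\in L$, $s\in S$; $\mathrm{coS}(L)$ is the frame of all sublocales ordered by reverse inclusion (bottom $0=L$, top $1=\{1\}$); all lattice operations and pseudocomplements $^\ast$ are taken in $\mathrm{coS}(L)$. The frame $\mathfrak{L}(\overline{\mathbb{IR}})$ is presented by generators $(r,\textsf{---})$, $(\textsf{---},s)$ ($r,s\in\mathbb{Q}$) subject to (r1) $(r,\textsf{---})\wedge(\textsf{---},s)=0$ whenever $r\ge s$; (r3) $(r,\textsf{---})=\bigvee_{s>r}(s,\textsf{---})$; (r4) $(\textsf{---},s)=\bigvee_{r<s}(\textsf{---},r)$. $\overline{\mathrm{F}}(L)$ is the set of frame homomorphisms $f\colon\mathfrak{L}(\overline{\mathbb{IR}})\to\mathrm{coS}(L)$ with $f(r,\textsf{---})^\ast\le f(\textsf{---},s)$ and $f(\textsf{---},s)^\ast\le f(r,\textsf{---})$ for all $r<s$, ordered by $f\le g$ iff $f(r,\textsf{---})\le g(r,\textsf{---})$ and $g(\textsf{---},s)\le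 f(\textsf{---},s)$; it is a complete lattice with top $\boldsymbol{+\infty}$ ($\boldsymbol{+\infty}(r,\textsf{---})=1$, $\boldsymbol{+\infty}(\textsf{---},s)=0$) and bottom $\boldsymbol{-\infty}$ ($\boldsymbol{-\infty}(r,\textsf{---})=0$, $\boldsymbol{-\infty}(\textsf{---},s)=1$). An $f\in\overline{\mathrm{F}}(L)$ is real-valued if for every $g\in\overline{\mathrm{F}}(L)$: $f\vee g=\boldsymbol{+\infty}$ implies $g=\boldsymbol{+\infty}$, and $f\wedge g=\boldsymbol{-\infty}$ implies $g=\boldsymbol{-\infty}$ (joins and meets in $\overline{\mathrm{F}}(L)$). *)

From mathcomp Require Import all_boot all_order all_algebra.
Set Implicit Arguments. Unset Strict Implicit. Unset Printing Implicit Defensive.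
Import Order.TTheory GRing.Theory Num.Theory.
Local Open Scope ring_scope.

Record frame := Frame {
  fcarrier :> Type;
  fle : fcarrier -> fcarrier -> Prop;
  fsup : (fcarrier -> Prop) -> fcarrier;
  fmeet : fcarrier -> fcarrier -> fcarrier;
  fle_refl : forall x, fle x x;
  fle_trans : forall x y z, fle x y -> fle y z -> fle x z;
  fle_anti : forall x y, fle x y -> fle y x -> x = y;
  fsup_ub : forall (P : fcarrier -> Prop) x, P x -> fle x (fsup P);
  fsup_least : forall (P : fcarrier -> Prop) y,
      (forall x, P x -> fle x y) -> fle (fsup P) y;
  fmeet_l : forall x y, fle (fmeet x y) x;
  fmeet_r : forall x y, fle (fmeet x y) y;
  fmeet_glb : forall x y z, fle z x -> fle z y -> fle z (fmeet x y);
  fdistr : forall x (P : fcarrier -> Prop),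
      fmeet x (fsup P) = fsup (fun z => exists y, P y /\ z = fmeet x y)
}.

Section FrameOps.
Variable L : frame.
Definition ftop : L := fsup (fun _ => True).
Definition finf (P : L -> Prop) : L := fsup (fun z => forall y, P y -> fle z y).
Definition fimp (x y : L) : L := fsup (fun z => fle (fmeet z x) y).
End FrameOps.

Definition is_sublocale (L : frame) (S : L -> Prop) : Prop :=
  (forall P : L -> Prop, (forall x, P x -> S x) -> S (finf P)) /\
  (forall x s, S s -> S (fimp x s)).

(** * The frame coS(L): sublocales ordered by REVERSE inclusion.
    Elements are represented by their underlying subsets [L -> Prop]. *)
Section CoS.
Variable L : frame.

Definition coS0 : L -> Prop := fun _ => True.
Definition coS1 : L -> Prop := fun x => x = ftop L.

Definition coS_le (S T : L -> Prop) : Prop := forall x, T x -> S x.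

Definition coS_join (I : Type) (F : I -> L -> Prop) : L -> Prop :=
  fun x => forall i, F i x.

Definition coS_meet (I : Type) (F : I -> L -> Prop) : L -> Prop :=
  fun x => forall Y, is_sublocale Y -> (forall i y, F i y -> Y y) -> Y x.

Definition coS_meet2 (S T : L -> Prop) : L -> Prop :=
  coS_meet (fun b : bool => if b then S else T).

Definition coS_pc (S : L -> Prop) : L -> Prop :=
  fun x => forall T, is_sublocale T -> coS_meet2 S T = coS0 -> T x.
End CoS.

(** A frame homomorphism f : L(IR-bar) -> coS(L) is given (universal property
    of the presentation) by its values on generators:
    [up f r] = f(r,---) and [down f s] = f(---,s), subject to (r1),(r3),(r4). *)
Record gen_assign (L : frame) := GenAssign {
  up : rat -> L -> Prop;
  down : rat -> L -> Prop
}.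

Definition is_frame_hom_gen (L : frame) (f : gen_assign L) : Prop :=
  (forall r, is_sublocale (up f r)) /\
  (forall s, is_sublocale (down f s)) /\
  (forall r s, s <= r -> coS_meet2 (up f r) (down f s) = @coS0 L) /\
  (forall r, up f r = coS_join (fun s : {s : rat | r < s} => up f (sval s))) /\
  (forall s, down f s = coS_join (fun r : {r : rat | r < s} => down f (sval r))).

Definition inFbar (L : frame) (f : gen_assign L) : Prop :=
  is_frame_hom_gen f /\
  (forall r s, r < s ->
     coS_le (coS_pc (up f r)) (down f s) /\ coS_le (coS_pc (down f s)) (up f r)).

Definition Fle (L : frame) (f g : gen_assign L) : Prop :=
  (forall r, coS_le (up f r) (up g r)) /\ (forall s, coS_le (down g s) (down f s)).

Definition Fpinf (L : frame) : gen_assign L := GenAssign (fun _ => @coS1 L) (fun _ => @coS0 L).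
Definition Fminf (L : frame) : gen_assign L := GenAssign (fun _ => @coS0 L) (fun _ => @coS1 L).

Definition is_Fjoin (L : frame) (h f g : gen_assign L) : Prop :=
  Fle f h /\ Fle g h /\ forall k, inFbar k -> Fle f k -> Fle g k -> Fle h k.
Definition is_Fmeet (L : frame) (h f g : gen_assign L) : Prop :=
  Fle h f /\ Fle h g /\ forall k, inFbar k -> Fle k f -> Fle k g -> Fle k h.

Definition real_valued (L : frame) (f : gen_assign L) : Prop :=
  forall g, inFbar g ->
    (is_Fjoin (Fpinf L) f g -> g = Fpinf L) /\
    (is_Fmeet (Fminf L) f g -> g = Fminf L).

(* Work in coS(L), where joins are intersections and S^* is the least sublocale
   T with S \/ T = L.  Since f(r,---) /\ f(---,r) = 0 and f(r,---)^* <= f(---,s)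
   for r < s, the families of the f(r,---)^* and of the f(---,s) interleave, so
   (\/_r f(r,---))^* = /\_r f(r,---)^* vanishes iff /\_s f(---,s) does: this is
   (2) <=> (3).  For (1) <=> (3), the symmetry r |-> -r swapping the two kinds of
   generators reduces everything to joins with +oo.  If c = /\_r f(r,---) is not 0,
   the constant element g with g(r,---) = c^* and g(---,s) = c^** is not +oo, yet
   f \/ g = +oo.  Conversely, if f \/ g = +oo, the regularization of
   r |-> (f(r,---) \/ g(r,---))^* is an upper bound of f and g, hence +oo; so all
   these pseudocomplements vanish, which gives g(r,---)^* <= f(t,---) for all t,
   whence g(r,---)^* <= /\_t f(t,---) = 0 and g = +oo. *)

From mathcomp Require Import all_boot all_order all_algebra lra.
From Stdlib Require Import FunctionalExtensionality PropExtensionality.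
Import Order.TTheory GRing.Theory Num.Theory.
Local Open Scope ring_scope.

Section FrameFacts.
Context {L : frame}.
Implicit Types (x y z a b : L) (S T : L -> Prop).

Lemma fle_top x : fle x (ftop L).
Proof. exact: fsup_ub. Qed.

Lemma finf_lb {P : L -> Prop} {y} : P y -> fle (finf P) y.
Proof. by move=> Py; apply: fsup_least => z; apply. Qed.

Lemma finf_glb {P : L -> Prop} {z} : (forall y, P y -> fle z y) -> fle z (finf P).
Proof. exact: (@fsup_ub L (fun z => forall y, P y -> fle z y)). Qed.

Lemma fmeetC x y : fmeet x y = fmeet y x.
Proof. by apply: fle_anti; apply: fmeet_glb; (apply: fmeet_r || apply: fmeet_l). Qed.

Lemma fmeet_top x : fmeet x (ftop L) = x.
Proof.
by apply: fle_anti; [exact: fmeet_l | apply: fmeet_glb; [exact: fle_refl | exact: fle_top]].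
Qed.

Lemma fmeet_le {x y x' y'} : fle x x' -> fle y y' -> fle (fmeet x y) (fmeet x' y').
Proof.
move=> xx' yy'; apply: fmeet_glb.
  exact: fle_trans (fmeet_l _ _) xx'.
exact: fle_trans (fmeet_r _ _) yy'.
Qed.

Lemma fimpP x y z : fle z (fimp x y) <-> fle (fmeet z x) y.
Proof.
split=> [zxy|]; last exact: (@fsup_ub L (fun z => fle (fmeet z x) y)).
apply: (@fle_trans _ _ (fmeet x (fimp x y))).
  by apply: fmeet_glb; [exact: fmeet_r | exact: fle_trans (fmeet_l _ _) zxy].
by rewrite /fimp fdistr; apply: fsup_least => _ [w [wxy ->]]; rewrite fmeetC.
Qed.

Lemma fimp_eval x y : fle (fmeet (fimp x y) x) y.
Proof. by apply/fimpP; exact: fle_refl. Qed.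

Lemma fimp_meet x a b : fimp x (fmeet a b) = fmeet (fimp x a) (fimp x b).
Proof.
apply: fle_anti.
  by apply: fmeet_glb; apply/fimpP; apply: fle_trans (fimp_eval _ _) _;
    [exact: fmeet_l | exact: fmeet_r].
apply/fimpP; apply: fmeet_glb.
  by apply: fle_trans (fimp_eval x a); apply: fmeet_le (fmeet_l _ _) (fle_refl _).
by apply: fle_trans (fimp_eval x b); apply: fmeet_le (fmeet_r _ _) (fle_refl _).
Qed.

Lemma sublocale_top {S} : is_sublocale S -> S (ftop L).
Proof.
case=> meetS _; have -> : ftop L = finf (fun _ => False) by apply: fle_anti;
  [apply: finf_glb | exact: fle_top].
exact: meetS.
Qed.

Lemma sublocale_fmeet {S x y} : is_sublocale S -> S x -> S y -> S (fmeet x y).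
Proof.
case=> meetS _ Sx Sy; have -> : fmeet x y = finf (fun w => w = x \/ w = y).
  apply: fle_anti; last by apply: fmeet_glb; apply: finf_lb; [left | right].
  by apply: finf_glb => w [->|->]; [exact: fmeet_l | exact: fmeet_r].
by apply: meetS => w [->|->].
Qed.

Definition meetset S T : L -> Prop :=
  fun z => exists a b, [/\ S a, T b & z = fmeet a b].

Lemma is_sublocale_meetset {S T} :
  is_sublocale S -> is_sublocale T -> is_sublocale (meetset S T).
Proof.
move=> subS subT; split=> [P PST|x _ [a [b [Sa Tb ->]]]]; last first.
  exists (fimp x a), (fimp x b); split; last exact: fimp_meet.
    by case: subS => _; apply.
  by case: subT => _; apply.
pose A := finf (fun a => S a /\ exists z b, [/\ P z, T b & z = fmeet a b]).
pose B := finf (fun b => T b /\ exists z a, [/\ P z, S a & z = fmeet a b]).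
exists A, B; split.
- by case: subS => meetS _; apply: meetS => a [].
- by case: subT => meetT _; apply: meetT => b [].
apply: fle_anti.
  apply: fmeet_glb; apply: finf_glb.
    move=> a [_ [z [b [Pz _ ez]]]]; apply: fle_trans (finf_lb Pz) _.
    by rewrite ez; exact: fmeet_l.
  move=> b [_ [z [a [Pz _ ez]]]]; apply: fle_trans (finf_lb Pz) _.
  by rewrite ez; exact: fmeet_r.
apply: finf_glb => z Pz; have [a [b [Sa Tb ez]]] := PST z Pz.
by rewrite ez; apply: fmeet_le; apply: finf_lb; split=> //; [exists z, b | exists z, a].
Qed.

End FrameFacts.

Section Sublocales.
Context {L : frame}.
Implicit Types (x y : L) (S T U W : L -> Prop).

(* S /\ T = 0 in coS(L), i.e. S \/ T = L as sublocales. *)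
Definition coS_disjoint S T : Prop := forall x, coS_meet2 S T x.
Definition coS_join2 S T : L -> Prop := coS_join (fun b : bool => if b then S else T).

Lemma coS_ext S T : (forall x, S x <-> T x) -> S = T.
Proof.
by move=> eqST; apply: functional_extensionality => x; apply: propositional_extensionality.
Qed.

Lemma coS_eq0P S : S = @coS0 L <-> forall x, S x.
Proof. by split=> [-> // | allS]; apply: coS_ext. Qed.

Lemma coS_lexx S : coS_le S S.
Proof. by []. Qed.

Lemma coS_le_trans {S T U} : coS_le S T -> coS_le T U -> coS_le S U.
Proof. by move=> leST leTU x /leTU /leST. Qed.

Lemma is_sublocale_coS1 : is_sublocale (@coS1 L).
Proof.
split=> [P P1|x _ ->]; apply: fle_anti; try exact: fle_top.
  by apply: finf_glb => y /P1 ->; exact: fle_refl.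
by apply/fimpP; exact: fle_top.
Qed.

Lemma coS_le_top {S} : is_sublocale S -> coS_le S (@coS1 L).
Proof. by move=> subS x ->; exact: sublocale_top. Qed.

Lemma is_sublocale_bigcap {I : Type} {P : I -> Prop} {F : I -> L -> Prop} :
  (forall i, P i -> is_sublocale (F i)) -> is_sublocale (fun x => forall i, P i -> F i x).
Proof.
move=> subF; split=> [Q QF i Pi | x s Fs i Pi]; have [meetF impF] := subF i Pi.
  by apply: meetF => y /QF; apply.
exact/impF/Fs.
Qed.

Lemma is_sublocale_coS_join {I : Type} {F : I -> L -> Prop} :
  (forall i, is_sublocale (F i)) -> is_sublocale (coS_join F).
Proof.
move=> subF; split=> [Q QF i | x s Fs i]; have [meetF impF] := subF i.
  by apply: meetF => y /QF.
exact/impF/Fs.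
Qed.

Lemma coS_join_ub {I : Type} {F : I -> L -> Prop} i : coS_le (F i) (coS_join F).
Proof. by move=> x /(_ i). Qed.

Lemma coS_join_lub {I : Type} {F : I -> L -> Prop} {U} :
  (forall i, coS_le (F i) U) -> coS_le (coS_join F) U.
Proof. by move=> leFU x Ux i; exact: leFU. Qed.

Lemma coS_join_sigE {I : Type} (P : I -> Prop) (F : I -> L -> Prop) x :
  coS_join (fun p : {i | P i} => F (sval p)) x <-> forall i, P i -> F i x.
Proof. by split=> [Fx i Pi | Fx [i Pi]]; [exact: Fx (exist _ i Pi) | exact: Fx]. Qed.

Lemma is_sublocale_coS_meet {I : Type} {F : I -> L -> Prop} : is_sublocale (coS_meet F).
Proof.
split=> [P PF Y subY FY | x s Fs Y subY FY]; have [meetY impY] := subY.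
  by apply: meetY => y /PF; apply.
exact/impY/(Fs Y subY FY).
Qed.

Lemma coS_meet_lb {I : Type} {F : I -> L -> Prop} i : coS_le (coS_meet F) (F i).
Proof. by move=> x Fx Y _ FY; exact: FY Fx. Qed.

Lemma coS_meet_glb {I : Type} {F : I -> L -> Prop} {U} :
  is_sublocale U -> (forall i, coS_le U (F i)) -> coS_le U (coS_meet F).
Proof. by move=> subU leUF x; apply=> // i y; exact: leUF. Qed.

Lemma coS_meet2E {S T x} : is_sublocale S -> is_sublocale T ->
  coS_meet2 S T x <-> meetset S T x.
Proof.
move=> subS subT; split=> [|[a [b [Sa Tb ->]]] Y subY STY].
  apply; first exact: is_sublocale_meetset.
  case=> y /= Sy; [exists y, (ftop L) | exists (ftop L), y].
    by split; [|exact: sublocale_top|rewrite fmeet_top].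
  by split; [exact: sublocale_top| |rewrite fmeetC fmeet_top].
by apply: sublocale_fmeet; [|exact: (STY true)|exact: (STY false)].
Qed.

Lemma coS_disjointC {S T} : coS_disjoint S T -> coS_disjoint T S.
Proof.
by move=> dST x Y subY TSY; apply: dST => // -[]; [exact: (TSY false) | exact: (TSY true)].
Qed.

Lemma coS_disjointW {S T S' T'} :
  coS_le S' S -> coS_le T' T -> coS_disjoint S T -> coS_disjoint S' T'.
Proof.
move=> leS leT dST x Y subY STY; apply: dST => // -[] y /=.
  by move/leS; exact: (STY true).
by move/leT; exact: (STY false).
Qed.

Lemma coS_disjoint_self {S} : is_sublocale S -> coS_disjoint S S -> forall x, S x.
Proof. by move=> subS dSS x; apply: dSS => // -[]. Qed.

Lemma is_sublocale_coS_pc {S} : is_sublocale (coS_pc S).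
Proof.
split=> [P PS T subT dST | x s Ss T subT dST]; have [meetT impT] := subT.
  by apply: meetT => y /PS; apply.
exact/impT/(Ss T subT dST).
Qed.

Lemma coS_le_pc {S T} : is_sublocale T -> coS_disjoint S T -> coS_le T (coS_pc S).
Proof. by move=> subT dST x; apply=> //; exact/coS_eq0P. Qed.

(* Let s be the least element of S above x.  Then x = s /\ (s -> x), and s -> x
   lies in every sublocale T with S \/ T = L. *)
Lemma coS_disjoint_pc {S} : is_sublocale S -> coS_disjoint S (coS_pc S).
Proof.
move=> subS x; pose s := finf (fun y => S y /\ fle x y).
have Ss : S s by case: subS => meetS _; apply: meetS => y [].
have xs : fle x s by apply: finf_glb => y [].
have -> : x = fmeet s (fimp s x).
  apply: fle_anti; last by rewrite fmeetC; exact: fimp_eval.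
  by apply: fmeet_glb => //; apply/fimpP; exact: fmeet_l.
apply/coS_meet2E; [done | exact: is_sublocale_coS_pc |].
exists s, (fimp s x); split=> // T subT /coS_eq0P/(_ x).
case/coS_meet2E=> // a [b [Sa Tb ex]].
have sa : fle s a by apply: finf_lb; rewrite ex; split; [|exact: fmeet_l].
have -> : fimp s x = fimp s b.
  apply: fle_anti; apply/fimpP.
    by apply: fle_trans (fimp_eval s x) _; rewrite ex; exact: fmeet_r.
  by rewrite ex; apply: fmeet_glb; [exact: fle_trans (fmeet_r _ _) sa | exact: fimp_eval].
by case: subT => _; apply.
Qed.

Lemma coS_pc_le {S T} : is_sublocale T -> coS_le S T -> coS_le (coS_pc T) (coS_pc S).
Proof.
move=> subT leST; apply: coS_le_pc; first exact: is_sublocale_coS_pc.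
exact: (coS_disjointW leST (coS_lexx (coS_pc T)) (coS_disjoint_pc subT)).
Qed.

Lemma coS_le_pcC {S T} : is_sublocale S -> coS_le T (coS_pc S) -> coS_le S (coS_pc T).
Proof.
move=> subS leT; apply: coS_le_pc => //; apply: coS_disjointC.
exact: (coS_disjointW (coS_lexx S) leT (coS_disjoint_pc subS)).
Qed.

Lemma coS_le_pc2 {S} : is_sublocale S -> coS_le S (coS_pc (coS_pc S)).
Proof. by move=> subS; apply: coS_le_pcC. Qed.

Lemma coS_pc3 {S} : is_sublocale S -> coS_le (coS_pc (coS_pc (coS_pc S))) (coS_pc S).
Proof. by move=> subS; apply: coS_pc_le is_sublocale_coS_pc (coS_le_pc2 subS). Qed.

Lemma coS_pc0 : coS_le (@coS1 L) (coS_pc (@coS0 L)).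
Proof. by apply: (coS_le_pc is_sublocale_coS1) => x Y _ FY; exact: (FY true). Qed.

Lemma coS_le_pc_join {I : Type} {F : I -> L -> Prop} {W} :
  is_sublocale W -> (forall i, is_sublocale (F i)) ->
  (forall i, coS_le W (coS_pc (F i))) -> coS_le W (coS_pc (coS_join F)).
Proof.
move=> subW subF leW; apply: coS_le_pcC subW _.
by apply: coS_join_lub => i; apply: coS_le_pcC.
Qed.

Lemma coS_pc_join2_eq0_disjoint {S T} : is_sublocale S -> is_sublocale T ->
  (forall x, coS_pc (coS_join2 S T) x) -> coS_disjoint (coS_pc S) (coS_pc T).
Proof.
move=> subS subT pc0 x.
have : coS_le (coS_meet2 (coS_pc S) (coS_pc T)) (coS_pc (coS_join2 S T)).
  apply: coS_le_pc_join; first exact: is_sublocale_coS_meet.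
    by case.
  by case; [exact: (coS_meet_lb true) | exact: (coS_meet_lb false)].
by move/(_ x (pc0 x)).
Qed.

Lemma coS_meet_reindex {I J : Type} (F : J -> L -> Prop) (e : I -> J) :
  (forall j, exists i, e i = j) -> coS_meet (fun i => F (e i)) = coS_meet F.
Proof.
move=> surj; apply: coS_ext => x; split=> Fx Y subY FY; apply: Fx => // j y Fy.
  exact: FY (e j) y Fy.
by have [i ei] := surj j; apply: (FY i); rewrite ei.
Qed.

Lemma coS_pc_join_eq0_iff {I J : Type} (A : I -> L -> Prop) (B : J -> L -> Prop) :
  (forall i, is_sublocale (A i)) -> (forall j, is_sublocale (B j)) ->
  (forall i, exists j, coS_disjoint (A i) (B j)) ->
  (forall j, exists i, coS_le (coS_pc (A i)) (B j)) ->
  coS_pc (coS_join A) = @coS0 L <-> coS_meet B = @coS0 L.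
Proof.
move=> subA subB AB BA; rewrite !coS_eq0P; split=> [pcA0 x | B0 x].
  apply: (coS_le_pcC is_sublocale_coS_meet _ x (pcA0 x)).
  apply: coS_join_lub => i; have [j dij] := AB i.
  apply: (coS_le_pc (subA i)); apply: coS_disjointC.
  exact: (coS_disjointW (coS_lexx (A i)) (coS_meet_lb j) dij).
apply: (coS_meet_glb is_sublocale_coS_pc _ x (B0 x)) => j.
have [i leB] := BA j; apply: coS_le_trans leB.
exact: (coS_pc_le (is_sublocale_coS_join subA) (coS_join_ub i)).
Qed.

End Sublocales.

Section FbarFacts.
Context {L : frame} {f : gen_assign L}.
Hypothesis hf : inFbar f.

Lemma is_sublocale_up r : is_sublocale (up f r).
Proof. by case: hf => [[subU _] _]. Qed.

Lemma is_sublocale_down s : is_sublocale (down f s).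
Proof. by case: hf => [[_ [subD _]] _]. Qed.

Lemma up_down_disjoint {r s} : s <= r -> coS_disjoint (up f r) (down f s).
Proof. by case: hf => [[_ [_ [r1 _]]] _] /r1/coS_eq0P. Qed.

Lemma upE r x : up f r x <-> forall s, r < s -> up f s x.
Proof. by case: hf => [[_ [_ [_ [r3 _]]]] _]; rewrite {1}r3 coS_join_sigE. Qed.

Lemma downE s x : down f s x <-> forall r, r < s -> down f r x.
Proof. by case: hf => [[_ [_ [_ [_ r4]]]] _]; rewrite {1}r4 coS_join_sigE. Qed.

Lemma up_le {r t} : r <= t -> coS_le (up f t) (up f r).
Proof. by rewrite le_eqVlt => /orP [/eqP -> // | rt] x /upE; apply. Qed.

Lemma down_le {r s} : r <= s -> coS_le (down f r) (down f s).
Proof. by rewrite le_eqVlt => /orP [/eqP -> // | rs] x /downE; apply. Qed.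

Lemma pc_up_le_down {r s} : r < s -> coS_le (coS_pc (up f r)) (down f s).
Proof. by case: hf => _ compat /compat []. Qed.

Lemma pc_down_le_up {r s} : r < s -> coS_le (coS_pc (down f s)) (up f r).
Proof. by case: hf => _ compat /compat []. Qed.

Lemma down_le_pc_up {r s} : s <= r -> coS_le (down f s) (coS_pc (up f r)).
Proof. by move=> sr; apply: coS_le_pc (is_sublocale_down s) (up_down_disjoint sr). Qed.

Lemma pc_join_up_eq0_iff :
  coS_pc (coS_join (fun r => up f r)) = @coS0 L <-> coS_meet (fun s => down f s) = @coS0 L.
Proof.
apply: coS_pc_join_eq0_iff is_sublocale_up is_sublocale_down _ _ => [r | s].
  by exists r; exact: up_down_disjoint (lexx r).
by exists (s - 1); apply: pc_up_le_down; lra.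
Qed.

Lemma pc_join_down_eq0_iff :
  coS_pc (coS_join (fun s => down f s)) = @coS0 L <-> coS_meet (fun r => up f r) = @coS0 L.
Proof.
apply: coS_pc_join_eq0_iff is_sublocale_down is_sublocale_up _ _ => [s | r].
  by exists s; apply: coS_disjointC; exact: up_down_disjoint (lexx s).
by exists (r + 1); apply: pc_down_le_up; lra.
Qed.

End FbarFacts.

Section FbarIntro.
Context {L : frame}.
Implicit Types (f h : gen_assign L).

Lemma inFbarI f :
  (forall r, is_sublocale (up f r)) -> (forall s, is_sublocale (down f s)) ->
  (forall r s, s <= r -> coS_disjoint (up f r) (down f s)) ->
  (forall r x, up f r x <-> forall s, r < s -> up f s x) ->
  (forall s x, down f s x <-> forall r, r < s -> down f r x) ->
  (forall r s, r < s -> coS_le (coS_pc (up f r)) (down f s)) ->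
  (forall r s, r < s -> coS_le (coS_pc (down f s)) (up f r)) ->
  inFbar f.
Proof.
move=> subU subD r1 r3 r4 compatU compatD; split; last by move=> r s rs; split;
  [exact: compatU | exact: compatD].
split=> //; split=> //; split; first by move=> r s /r1 d; apply/coS_eq0P.
split; first by move=> r; apply: coS_ext => x; rewrite coS_join_sigE r3.
by move=> s; apply: coS_ext => x; rewrite coS_join_sigE r4.
Qed.

Lemma Fle_Fpinf {h} : inFbar h -> Fle h (Fpinf L).
Proof. by move=> hh; split=> [r x -> | s x _ //]; apply: sublocale_top (is_sublocale_up hh r). Qed.

Lemma Fpinf_of_down0 {h} : inFbar h -> (forall s x, down h s x) -> h = Fpinf L.
Proof.
move=> hh down0; have up1 r : up h r = @coS1 L.
  apply: coS_ext => x; split=> [hx | ->]; last exact: sublocale_top (is_sublocale_up hh r).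
  apply: coS_pc0; have <- : down h (r + 1) = @coS0 L by apply/coS_eq0P.
  by apply: (pc_down_le_up hh) hx; rewrite ltrDl.
case: h hh down0 up1 => u d /= _ down0 up1; congr GenAssign; apply: functional_extensionality => r.
  exact: up1.
exact/coS_eq0P.
Qed.

End FbarIntro.

Section Regularization.
Context {L : frame} (E : rat -> L -> Prop).
Hypotheses (subE : forall r, is_sublocale (E r))
  (E_regular : forall r, coS_le (coS_pc (coS_pc (E r))) (E r))
  (E_mono : forall r t, r <= t -> coS_le (E r) (E t)).

Definition reg_down s : L -> Prop := fun x => forall r, r < s -> E r x.
Definition reg_up r : L -> Prop := fun x => forall s, r < s -> coS_pc (reg_down s) x.
Definition regularization := GenAssign reg_up reg_down.

Lemma is_sublocale_reg_down s : is_sublocale (reg_down s).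
Proof. exact: is_sublocale_bigcap. Qed.

Lemma is_sublocale_reg_up r : is_sublocale (reg_up r).
Proof. by apply: is_sublocale_bigcap => s _; exact: is_sublocale_coS_pc. Qed.

Lemma reg_down_le_E t : coS_le (reg_down t) (E t).
Proof. by move=> x Etx r rt; apply: E_mono (ltW rt) _ Etx. Qed.

Lemma reg_down_le {s t} : s <= t -> coS_le (reg_down s) (reg_down t).
Proof. by move=> st x Dx r rs; apply: Dx; exact: lt_le_trans rs st. Qed.

Lemma pc_reg_up_le_reg_down {r s} : r < s -> coS_le (coS_pc (reg_up r)) (reg_down s).
Proof.
move=> rs; have [rt ts] := midf_lt rs; set t := (r + s) / 2 in rt ts.
apply: (coS_le_trans (T := coS_pc (coS_pc (reg_down t)))).
  apply: (coS_pc_le (S := coS_pc (reg_down t)) (is_sublocale_reg_up r)).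
  by move=> x; apply.
apply: (coS_le_trans (T := coS_pc (coS_pc (E t)))).
  by apply: coS_pc_le is_sublocale_coS_pc _; apply: coS_pc_le (subE t) (reg_down_le_E t).
apply: coS_le_trans (E_regular t) _.
by move=> x Dx; apply: Dx.
Qed.

Lemma regularization_inFbar : inFbar regularization.
Proof.
apply: inFbarI => /=.
- exact: is_sublocale_reg_up.
- exact: is_sublocale_reg_down.
- move=> r s sr; have le_up : coS_le (reg_up r) (coS_pc (reg_down s)).
    move=> x Dx t rt; apply: (coS_pc_le (is_sublocale_reg_down t)) Dx.
    exact: reg_down_le (le_trans sr (ltW rt)).
  exact: (coS_disjointW le_up (coS_lexx _)
    (coS_disjointC (coS_disjoint_pc (is_sublocale_reg_down s)))).
- move=> r x; split=> [Ux s rs t st | Ux s rs]; first exact: Ux (lt_trans rs st).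
  by have [rt ts] := midf_lt rs; exact: Ux _ rt s ts.
- move=> s x; split=> [Dx r rs t tr | Dx r rs]; first exact: Dx (lt_trans tr rs).
  by have [rt ts] := midf_lt rs; exact: Dx _ ts r rt.
- by move=> r s; exact: pc_reg_up_le_reg_down.
- by move=> r s rs x; apply.
Qed.

Lemma regularization_ub {h} : inFbar h ->
  (forall r, coS_le (E r) (coS_pc (up h r))) -> Fle h regularization.
Proof.
move=> hh E_le; split=> [r x Ux | s x Dx r rs] /=.
  apply/(upE hh) => t rt; apply: (coS_le_pcC (is_sublocale_up hh t) _ _ (Ux t rt)).
  move=> y pcy r' r't; apply: E_le; move: y pcy.
  exact: (coS_pc_le (is_sublocale_up hh r') (up_le hh (ltW r't))).
by apply: E_le; exact: (pc_up_le_down hh rs).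
Qed.

End Regularization.

Section JoinWithPlusInfinity.
Context {L : frame} {f g : gen_assign L}.
Hypotheses (hf : inFbar f) (hg : inFbar g) (fg_top : is_Fjoin (Fpinf L) f g).

Let Z r := coS_join2 (up f r) (up g r).

Let is_sublocale_Z r : is_sublocale (Z r).
Proof. by apply: is_sublocale_coS_join; case; exact: is_sublocale_up. Qed.

Lemma pc_join2_up_eq0 r x : coS_pc (Z r) x.
Proof.
have E_mono r1 r2 : r1 <= r2 -> coS_le (coS_pc (Z r1)) (coS_pc (Z r2)).
  move=> r12; apply: coS_pc_le (is_sublocale_Z r1) _.
  move=> y Zy [] /=; [apply: (up_le hf r12) (Zy true) | apply: (up_le hg r12) (Zy false)].
have ub h : inFbar h -> (forall r, coS_le (up h r) (Z r)) ->
    Fle h (regularization (fun r => coS_pc (Z r))).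
  move=> hh le_up; apply: (regularization_ub _ hh) => r'.
  exact: coS_pc_le (is_sublocale_Z r') (le_up r').
have [_ [_ least]] := fg_top.
have := least _ (regularization_inFbar _ (fun _ => is_sublocale_coS_pc)
  (fun r => coS_pc3 (is_sublocale_Z r)) E_mono) (ub f hf (fun r => coS_join_ub true))
  (ub g hg (fun r => coS_join_ub false)).
by case=> _ /(_ (r + 1) x I); apply; rewrite ltrDl.
Qed.

Lemma pc_up_le_up r t : coS_le (coS_pc (up g r)) (up f t).
Proof.
suff key r' : r <= r' -> t < r' -> coS_le (coS_pc (up g r)) (up f t).
  by have [tr | rt] := ltP t r; [exact: key | apply: (key (t + 1)); lra].
move=> rr' tr'; apply: coS_le_trans (pc_down_le_up hf tr').
apply: (coS_le_trans (T := coS_pc (coS_pc (up f r')))).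
  apply: (coS_le_trans (T := coS_pc (up g r'))).
    exact: coS_pc_le (is_sublocale_up hg r) (up_le hg rr').
  apply: coS_le_pc is_sublocale_coS_pc _.
  apply: coS_pc_join2_eq0_disjoint; [exact: is_sublocale_up | exact: is_sublocale_up |].
  exact: pc_join2_up_eq0.
exact: coS_pc_le is_sublocale_coS_pc (down_le_pc_up hf (lexx r')).
Qed.

Lemma Fjoin_Fpinf_eq : coS_meet (fun r => up f r) = @coS0 L -> g = Fpinf L.
Proof.
move/coS_eq0P=> meet0; apply: (Fpinf_of_down0 hg) => s x.
apply: (down_le_pc_up hg (lexx s)); apply: coS_meet_glb (meet0 x) => //.
  exact: is_sublocale_coS_pc.
exact: pc_up_le_up.
Qed.

End JoinWithPlusInfinity.

Section JoinCharacterization.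
Context {L : frame}.

Lemma inFbar_pc_const {S : L -> Prop} : is_sublocale S ->
  inFbar (GenAssign (fun _ => coS_pc S) (fun _ => coS_pc (coS_pc S))).
Proof.
move=> subS; apply: inFbarI => /=.
- by move=> _; exact: is_sublocale_coS_pc.
- by move=> _; exact: is_sublocale_coS_pc.
- by move=> _ _ _; exact: coS_disjoint_pc is_sublocale_coS_pc.
- by move=> r x; split=> [// | Ux]; apply: (Ux (r + 1)); lra.
- by move=> s x; split=> [// | Dx]; apply: (Dx (s - 1)); lra.
- by move=> _ _ _; exact: coS_lexx.
- by move=> _ _ _; exact: coS_pc3 subS.
Qed.

Lemma meet_up_eq0_of_Fjoin {f} : inFbar f ->
  (forall g, inFbar g -> is_Fjoin (Fpinf L) f g -> g = Fpinf L) ->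
  coS_meet (fun r => up f r) = @coS0 L.
Proof.
move=> hf join_top; set c := coS_meet _.
have subc : is_sublocale c := is_sublocale_coS_meet.
have down_le_pc s : coS_le (down f s) (coS_pc c).
  apply: coS_le_trans (down_le_pc_up hf (lexx s)) _.
  exact: coS_pc_le (is_sublocale_up hf s) (coS_meet_lb s).
have hg := inFbar_pc_const subc.
have fg_top : is_Fjoin (Fpinf L) f
    (GenAssign (fun _ => coS_pc c) (fun _ => coS_pc (coS_pc c))).
  split; first exact: Fle_Fpinf hf.
  split; first exact: Fle_Fpinf hg.
  move=> k hk [_ fk] [_ gk]; have down0 s : forall x, down k s x.
    apply: coS_disjoint_self (is_sublocale_down hk s) _.
    exact: (coS_disjointW (coS_le_trans (fk s) (down_le_pc s)) (gk s)
      (coS_disjoint_pc is_sublocale_coS_pc)).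
  by rewrite (Fpinf_of_down0 hk down0); split=> r x.
move: (join_top _ hg fg_top) => /(f_equal (fun h => up h 0)) /= pc_c1.
apply/coS_eq0P; apply: (coS_disjoint_self subc).
have := coS_disjoint_pc subc; rewrite pc_c1.
exact: coS_disjointW (coS_lexx c) (coS_le_top subc).
Qed.

Lemma Fjoin_Fpinf_iff {f} : inFbar f ->
  (forall g, inFbar g -> is_Fjoin (Fpinf L) f g -> g = Fpinf L) <->
  coS_meet (fun r => up f r) = @coS0 L.
Proof.
move=> hf; split=> [| meet0 g hg fg_top]; first exact: meet_up_eq0_of_Fjoin.
exact: Fjoin_Fpinf_eq hf hg fg_top meet0.
Qed.

End JoinCharacterization.

Section Negation.
Context {L : frame}.
Implicit Types (f g h k : gen_assign L).

Definition negF f : gen_assign L :=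
  GenAssign (fun r => down f (- r)) (fun s => up f (- s)).

Lemma negFK : involutive negF.
Proof.
by case=> u d; congr GenAssign; apply: functional_extensionality => r; rewrite /= opprK.
Qed.

Lemma negF_Fpinf : negF (Fpinf L) = Fminf L.
Proof. by []. Qed.

Lemma negF_Fminf : negF (Fminf L) = Fpinf L.
Proof. by []. Qed.

Lemma inFbar_negF {f} : inFbar f -> inFbar (negF f).
Proof.
move=> hf; apply: inFbarI => /=.
- by move=> r; exact: is_sublocale_down.
- by move=> s; exact: is_sublocale_up.
- by move=> r s sr; apply: coS_disjointC; apply: (up_down_disjoint hf); rewrite lerN2.
- move=> r x; split=> [Dx s rs | Dx].
    by apply: (down_le hf _ x Dx); rewrite lerN2 ltW.
  by apply/(downE hf) => t tr; rewrite -(opprK t); apply: Dx; rewrite ltrNr.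
- move=> s x; split=> [Ux r rs | Ux].
    by apply: (up_le hf _ x Ux); rewrite lerN2 ltW.
  by apply/(upE hf) => t st; rewrite -(opprK t); apply: Ux; rewrite ltrNl.
- by move=> r s rs; apply: (pc_down_le_up hf); rewrite ltrN2.
- by move=> r s rs; apply: (pc_up_le_down hf); rewrite ltrN2.
Qed.

Lemma Fle_negF f g : Fle (negF f) (negF g) <-> Fle g f.
Proof.
split=> [[le_down le_up] | [le_up le_down]]; split=> r /=; try by [].
  by rewrite -(opprK r); exact: le_up.
by rewrite -(opprK r); exact: le_down.
Qed.

Lemma is_Fjoin_negF {h f g} : is_Fmeet h f g -> is_Fjoin (negF h) (negF f) (negF g).
Proof.
case=> hf [hg least]; split; first exact/Fle_negF.
split; first exact/Fle_negF.
move=> k hk fk gk; rewrite -(negFK k); apply/Fle_negF; apply: least.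
- exact: inFbar_negF.
- by apply/Fle_negF; rewrite negFK.
- by apply/Fle_negF; rewrite negFK.
Qed.

Lemma is_Fmeet_negF {h f g} : is_Fjoin h f g -> is_Fmeet (negF h) (negF f) (negF g).
Proof.
case=> fh [gh least]; split; first exact/Fle_negF.
split; first exact/Fle_negF.
move=> k hk kf kg; rewrite -(negFK k); apply/Fle_negF; apply: least.
- exact: inFbar_negF.
- by apply/Fle_negF; rewrite negFK.
- by apply/Fle_negF; rewrite negFK.
Qed.

Lemma Fmeet_Fminf_iff {f} : inFbar f ->
  (forall g, inFbar g -> is_Fmeet (Fminf L) f g -> g = Fminf L) <->
  coS_meet (fun s => down f s) = @coS0 L.
Proof.
move=> hf; rewrite -(coS_meet_reindex (fun s => down f s) -%R); last first.
  by move=> s; exists (- s); rewrite opprK.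
rewrite -(Fjoin_Fpinf_iff (inFbar_negF hf)).
split=> [meet_bot g hg fg | join_top g hg fg].
  rewrite -(negFK g) -negF_Fminf; congr negF; apply: meet_bot; first exact: inFbar_negF.
  by have := is_Fmeet_negF fg; rewrite negF_Fpinf negFK.
rewrite -(negFK g) -negF_Fpinf; congr negF; apply: join_top; first exact: inFbar_negF.
exact: is_Fjoin_negF fg.
Qed.

End Negation.

Lemma real_valuedE {L : frame} {f : gen_assign L} : inFbar f ->
  real_valued f <->
  coS_meet (fun s => down f s) = @coS0 L /\ coS_meet (fun r => up f r) = @coS0 L.
Proof.
move=> hf; rewrite -(Fjoin_Fpinf_iff hf) -(Fmeet_Fminf_iff hf).
split=> [rv | [meet_bot join_top] g hg]; last by split; [exact: join_top | exact: meet_bot].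
by split=> g hg; have [] := rv g hg.
Qed.

Theorem corollary5p4 (L : frame) (f : gen_assign L) (hf : inFbar f) :
  (real_valued f <->
     (coS_pc (coS_join (fun r : rat => up f r)) = @coS0 L /\
      coS_pc (coS_join (fun s : rat => down f s)) = @coS0 L)) /\
  ((coS_pc (coS_join (fun r : rat => up f r)) = @coS0 L /\
    coS_pc (coS_join (fun s : rat => down f s)) = @coS0 L) <->
     (coS_meet (fun s : rat => down f s) = @coS0 L /\
      coS_meet (fun r : rat => up f r) = @coS0 L)).
Proof.
by rewrite (pc_join_up_eq0_iff hf) (pc_join_down_eq0_iff hf) (real_valuedE hf).
Qed.
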